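(* Let $N$ be a positive even integer and let $\sigma\colon\{0,1\}^*\to\{0,1,\#\}^*$ be the substitution defined by $\sigma(0)=\#0^{N-1}$ and $\sigma(1)=\#1^{N-1}$. Let $\mathbf{w}$ be an infinite binary word. If an abelian power $u_0\cdots u_{e-1}$ with $e\ge N$ occurs in $\sigma(\mathbf{w})$, then $N$ divides $|u_0|$.
   Context: Two finite words $u,v$ are abelian equivalent, written $u\sim v$, if they are permutations of each other. An abelian power of exponent $e$ (a positive integer) and period $m$ is a word of the form $u_0u_1\cdots u_{e-1}$ where $u_0,\dots,u_{e-1}$ are nonempty, pairwise abelian equivalent, and $m=|u_0|$. The image $\sigma(\mathbf{w})$ of an infinite word is obtained by applying $\sigma$ letter by letter. *)

From mathcomp Require Import all_boot.
Set Implicit Arguments. Unset Strict Implicit. Unset Printing Implicit Defensive.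

(* Output alphabet {0,1,#}: [Some b] is the letter b, [None] is #. *)
Definition letter := option bool.
Definition hash : letter := None.

Definition infword (T : Type) := nat -> T.

Definition sigma (N : nat) (a : bool) : seq letter := hash :: nseq N.-1 (Some a).

(* Image sigma(w) of an infinite binary word, applying sigma letter by letter:
   since every sigma(a) has length N (N > 0), position i of the concatenation
   sigma(w 0) sigma(w 1) ... is letter (i mod N) of sigma(w (i div N)). *)
Definition sigma_img (N : nat) (w : infword bool) : infword letter :=
  fun i => nth hash (sigma N (w (i %/ N))) (i %% N).

Definition abelian_eq (T : eqType) (u v : seq T) : bool := perm_eq u v.

(* The list of blocks us = [u_0; ...; u_{e-1}] forms an abelian power
   u_0 ... u_{e-1} of exponent e = size us (e >= 1): all blocks nonempty and
   pairwise abelian equivalent. Its period is size u_0. *)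
Definition abelian_power_blocks (T : eqType) (us : seq (seq T)) : Prop :=
  0 < size us /\ (forall u, u \in us -> 0 < size u) /\
  (forall u v, u \in us -> v \in us -> abelian_eq u v).

Definition occurs_in (T : Type) (s : seq T) (x : infword T) : Prop :=
  exists p, forall i, i < size s -> nth (x (p + i)) s i = x (p + i).

From mathcomp Require Import all_boot.

Set Implicit Arguments.
Unset Strict Implicit.
Unset Printing Implicit Defensive.

(* The letters # of sigma(w) sit exactly at the multiples of N, so every
   factor of length N * m contains exactly m of them.  The first N blocks of
   an abelian power of period m form such a factor, and, being abelian
   equivalent to u_0, they contain N times as many # as u_0 does; hence m is
   a multiple of N. *)

Section MultiplesInIota.

Variable N : nat.
Hypothesis N_gt0 : 0 < N.

Lemma count_dvdn_iota0 : count (dvdn N) (iota 0 N) = 1.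
Proof.
rewrite (@eq_in_count _ _ (pred1 0)); last first.
  by move=> i; rewrite mem_iota add0n /= /dvdn => /modn_small ->.
by rewrite count_uniq_mem ?iota_uniq // mem_iota N_gt0.
Qed.

Lemma count_dvdn_iotaN a : count (dvdn N) (iota a N) = 1.
Proof.
elim: a => [|a IHa]; first exact: count_dvdn_iota0.
have /(congr1 (count (dvdn N))) : a :: iota a.+1 N = iota a N ++ [:: a + N].
  by rewrite -[_ :: _]/(iota a N.+1) -addn1 iotaD.
rewrite count_cat IHa /= dvdn_addl // addn0 [1 + _]addnC.
by move=> /eqP; rewrite eqn_add2l => /eqP.
Qed.

Lemma count_dvdn_iota a k : count (dvdn N) (iota a (N * k)) = k.
Proof.
elim: k a => [|k IHk] a; first by rewrite muln0.
by rewrite mulnS iotaD count_cat count_dvdn_iotaN IHk.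
Qed.

End MultiplesInIota.

Lemma sigma_img_hashE N w i : 0 < N -> (sigma_img N w i == hash) = (N %| i).
Proof.
move=> N_gt0; rewrite /sigma_img /sigma /dvdn.
have := ltn_pmod i N_gt0.
by case: (i %% N) => [|j] //= lt_jN; rewrite nth_nseq ltn_predRL lt_jN.
Qed.

Lemma count_hash_sigma_factor N w p k : 0 < N ->
  count (pred1 hash) (mkseq (fun i => sigma_img N w (p + i)) (N * k)) = k.
Proof.
move=> N_gt0; rewrite /mkseq count_map.
rewrite (@eq_count _ _ (fun i => N %| p + i)); last first.
  by move=> i /=; rewrite sigma_img_hashE.
by rewrite -(count_map (addn p) (dvdn N)) -iotaDl addn0 count_dvdn_iota.
Qed.

Lemma occurs_in_catl (T : Type) (s t : seq T) x :
  occurs_in (s ++ t) x -> occurs_in s x.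
Proof.
move=> [p occ]; exists p => i lt_is.
by move: (occ i); rewrite size_cat nth_cat lt_is ltn_addr //; apply.
Qed.

Lemma occurs_in_mkseq (T : Type) (s : seq T) x :
  occurs_in s x -> exists p, s = mkseq (fun i => x (p + i)) (size s).
Proof.
move=> [p occ]; exists p.
apply: (@eq_from_nth _ (x p)) => [|i lt_is]; first by rewrite size_mkseq.
by rewrite nth_mkseq // -occ // (set_nth_default (x p)).
Qed.

Section FlattenPerm.

Variable T : eqType.

Lemma perm_flatten_nseq (ss : seq (seq T)) v :
  {in ss, forall u, perm_eq u v} ->
  perm_eq (flatten ss) (flatten (nseq (size ss) v)).
Proof.
elim: ss => [|u ss IHss] //= perm_ss.
rewrite perm_cat ?perm_ss ?mem_head // IHss // => u' ss_u'.
by rewrite perm_ss // inE ss_u' orbT.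
Qed.

Lemma size_flatten_nseq n (v : seq T) : size (flatten (nseq n v)) = n * size v.
Proof. by rewrite size_flatten /shape map_nseq sumn_nseq mulnC. Qed.

Lemma count_flatten_nseq (P : pred T) n v :
  count P (flatten (nseq n v)) = n * count P v.
Proof. by rewrite count_flatten map_nseq sumn_nseq mulnC. Qed.

Lemma abelian_power_perm_head (us : seq (seq T)) :
  abelian_power_blocks us -> {in us, forall u, perm_eq u (head [::] us)}.
Proof.
case: us => [|u0 us] [//= _ [_ ab_eq]] u us_u.
exact: ab_eq (mem_head _ _).
Qed.

End FlattenPerm.

Theorem lemma2 (N : nat) (HN : 0 < N) (Heven : ~~ odd N) (w : infword bool)
    (us : seq (seq letter)) :
  abelian_power_blocks us -> N <= size us ->
  occurs_in (flatten us) (sigma_img N w) ->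
  N %| size (head [::] us).
Proof.
move=> ab_us N_le_us occ_us.
set u0 := head [::] us.
have perm_prefix : perm_eq (flatten (take N us)) (flatten (nseq N u0)).
  rewrite -{2}(size_takel N_le_us); apply: perm_flatten_nseq => u /mem_take.
  exact: abelian_power_perm_head.
have occ_prefix : occurs_in (flatten (take N us)) (sigma_img N w).
  apply: (@occurs_in_catl _ _ (flatten (drop N us))).
  by rewrite -flatten_cat cat_take_drop.
have [p def_prefix] := occurs_in_mkseq occ_prefix.
have := count_hash_sigma_factor w p (size u0) HN.
rewrite -size_flatten_nseq -(perm_size perm_prefix) -def_prefix (permP perm_prefix).
by rewrite count_flatten_nseq => <-; apply: dvdn_mulr.
Qed.
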